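(* Let $A\in\mathbb{R}^{n\times n}$ be monotone, let $A=P_1-R_1+S_1$ be a double weak regular splitting and $A=P_2-R_2+S_2$ a double regular splitting of $A$. Suppose $1\notin\sigma(S_2P_1^{-1})$, $\widehat{A}^{-1}\geq 0$ where $\widehat{A}=(I-S_2P_1^{-1})A$, $P_1^{-1}R_1\geq P_2^{-1}R_2$ and $P_2^{-1}S_2\geq P_1^{-1}S_1$. Then $\rho(W_{12})\leq\min\{\rho(T_1),\rho(T_2)\}<1$, where $$W_{12}=\begin{pmatrix} P_2^{-1}R_2-P_2^{-1}S_2P_1^{-1}R_1 & P_2^{-1}S_2P_1^{-1}S_1\\ I & 0\end{pmatrix},\qquad T_i=\begin{pmatrix} P_i^{-1}R_i & -P_i^{-1}S_i\\ I&0\end{pmatrix}\ (i=1,2).$$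
   Context: Inequalities are entrywise; $\rho$ is the spectral radius, $\sigma$ the spectrum. $A$ is monotone if $A$ is nonsingular and $A^{-1}\geq 0$. A double splitting $A=P-R+S$ with $P$ nonsingular is a double regular splitting if $P^{-1}\geq0$, $R\geq0$, $S\leq0$, and a double weak regular splitting if $P^{-1}\geq 0$, $P^{-1}R\geq0$, $P^{-1}S\leq0$. *)

From HB Require Import structures.
From mathcomp Require Import all_boot all_order all_algebra.
From mathcomp Require Import complex.
Set Implicit Arguments. Unset Strict Implicit. Unset Printing Implicit Defensive.
Import Order.TTheory GRing.Theory Num.Theory.
Local Open Scope ring_scope.

Definition mxle (R : numDomainType) m n (A B : 'M[R]_(m, n)) : Prop :=
  forall i j, A i j <= B i j.

Definition monotone (R : numFieldType) n (A : 'M[R]_n) : Prop :=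
  A \in unitmx /\ mxle 0 (invmx A).

Definition cplx_mx (R : rcfType) m n (A : 'M[R]_(m, n)) : 'M[R[i]]_(m, n) :=
  map_mx (real_complex R) A.

Definition spectrum (R : rcfType) n (A : 'M[R]_n) : pred R[i] :=
  [pred z | eigenvalue (cplx_mx A) z].

Definition spectral_radius (R : rcfType) n (A : 'M[R]_n) : R :=
  \big[Num.max/0]_(z <- sval (closed_field_poly_normal (char_poly (cplx_mx A))))
     complex.Re `|z|.

Definition double_splitting (F : numFieldType) n (A P R S : 'M[F]_n) : Prop :=
  A = P - R + S /\ P \in unitmx.

Definition double_regular_splitting (F : numFieldType) n (A P R S : 'M[F]_n) : Prop :=
  double_splitting A P R S /\ mxle 0 (invmx P) /\ mxle 0 R /\ mxle S 0.

Definition double_weak_regular_splitting (F : numFieldType) n (A P R S : 'M[F]_n) : Prop :=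
  double_splitting A P R S /\ mxle 0 (invmx P) /\ mxle 0 (invmx P *m R)
  /\ mxle (invmx P *m S) 0.

(* For [T = [B C; I 0]] with [B, C >= 0], taking moduli in a left eigenvector
   for an eigenvalue of modulus [r > 0] gives [x >= 0], [x != 0] with
   [x Q(r) <= 0], where [Q(s) = s^2 I - s B - C]; this persists for
   [0 < a <= r].  Hence [rho(T) <= c < 1] as soon as no nonzero [x >= 0] has
   [x Q(a) <= 0] for [a] in [(c, 1]].
   For [T1] and [T2] this holds at [a = 1] because [Q_i(1) = P_i^-1 A].  For
   [a] in [(rho(T_i), 1]] the Z-matrices [Q1(a)] and [P2 Q2(a) A^-1] stay
   nonsingular, so they stay monotone from [a = 1] down to [a]: the entries of
   the inverse are rational in [a] and can only change sign at a root, while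
   a monotone Z-matrix stays monotone in a neighbourhood.  The identities
   [QW(a) = (I - Y2) Q1(a) + D] and [QW(a) A^-1 = P2^-1 (P2 Q2(a) A^-1) + E]
   with [D, E >= 0] (the comparison hypotheses give [D >= 0]) then transfer
   the property to [W12] and give [rho(W12) <= rho(T1), rho(T2)]. *)

From HB Require Import structures.
From mathcomp Require Import all_boot all_order all_algebra.
From mathcomp Require Import complex polyrcf.
From mathcomp Require Import ring lra.
Set Implicit Arguments. Unset Strict Implicit. Unset Printing Implicit Defensive.
Import Order.TTheory GRing.Theory Num.Theory.
Local Open Scope ring_scope.

Local Notation noroot p := (forall x, ~~ root p x).

Section EntrywiseOrder.
Variable R : numDomainType.

Lemma mxle0P m n (A : 'M[R]_(m, n)) : mxle 0 A <-> forall i j, 0 <= A i j.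
Proof. by split=> h i j; move: (h i j); rewrite mxE. Qed.

Lemma mxle_sub0 m n (A B : 'M[R]_(m, n)) : mxle A B <-> mxle 0 (B - A).
Proof. by split=> h i j; move: (h i j); rewrite !mxE subr_ge0. Qed.

Lemma mxle_opp0 m n (A : 'M[R]_(m, n)) : mxle A 0 <-> mxle 0 (- A).
Proof. by rewrite mxle_sub0 sub0r. Qed.

Lemma mxle_refl m n (A : 'M[R]_(m, n)) : mxle A A.
Proof. by move=> i j; apply: lexx. Qed.

Lemma mxle_anti m n (A B : 'M[R]_(m, n)) : mxle A B -> mxle B A -> A = B.
Proof. by move=> hAB hBA; apply/matrixP=> i j; apply/le_anti; rewrite hAB hBA. Qed.

Lemma addmx_ge0 m n (A B : 'M[R]_(m, n)) : mxle 0 A -> mxle 0 B -> mxle 0 (A + B).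
Proof. by move=> /mxle0P hA /mxle0P hB; apply/mxle0P=> i j; rewrite mxE addr_ge0. Qed.

Lemma scalemx_ge0 m n (a : R) (A : 'M[R]_(m, n)) :
  0 <= a -> mxle 0 A -> mxle 0 (a *: A).
Proof. by move=> ha /mxle0P hA; apply/mxle0P=> i j; rewrite mxE mulr_ge0. Qed.

Lemma mulmx_ge0 m n p (A : 'M[R]_(m, n)) (B : 'M[R]_(n, p)) :
  mxle 0 A -> mxle 0 B -> mxle 0 (A *m B).
Proof.
move=> /mxle0P hA /mxle0P hB; apply/mxle0P=> i j.
by rewrite mxE sumr_ge0 // => k _; rewrite mulr_ge0.
Qed.

Lemma mulmx_ge0_le0 m n p (A : 'M[R]_(m, n)) (B : 'M[R]_(n, p)) :
  mxle 0 A -> mxle B 0 -> mxle (A *m B) 0.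
Proof. by move=> hA /mxle_opp0 hB; apply/mxle_opp0; rewrite -mulmxN; apply: mulmx_ge0. Qed.

Lemma mulmx_le0_ge0 m n p (A : 'M[R]_(m, n)) (B : 'M[R]_(n, p)) :
  mxle A 0 -> mxle 0 B -> mxle (A *m B) 0.
Proof. by move=> /mxle_opp0 hA hB; apply/mxle_opp0; rewrite -mulNmx; apply: mulmx_ge0. Qed.

Lemma mulmx_le0 m n p (A : 'M[R]_(m, n)) (B : 'M[R]_(n, p)) :
  mxle A 0 -> mxle B 0 -> mxle 0 (A *m B).
Proof.
move=> /mxle_opp0 hA /mxle_opp0 hB.
by rewrite -[A *m B]opprK -mulNmx -mulmxN; apply: mulmx_ge0.
Qed.

Lemma scalar_mx_ge0 n (a : R) : 0 <= a -> mxle 0 (a%:M : 'M[R]_n).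
Proof. by move=> ha; apply/mxle0P=> i j; rewrite mxE mulrn_wge0. Qed.

Lemma block_mx_ge0 m1 m2 n1 n2 (A : 'M[R]_(m1, n1)) (B : 'M[R]_(m1, n2))
    (C : 'M[R]_(m2, n1)) (D : 'M[R]_(m2, n2)) :
  mxle 0 A -> mxle 0 B -> mxle 0 C -> mxle 0 D -> mxle 0 (block_mx A B C D).
Proof.
move=> /mxle0P hA /mxle0P hB /mxle0P hC /mxle0P hD; apply/mxle0P => i j.
rewrite -(splitK i) -(splitK j).
by case: (split i) => i'; case: (split j) => j';
  rewrite ?block_mxEul ?block_mxEur ?block_mxEdl ?block_mxEdr.
Qed.

Lemma mxle_row_mx m n1 n2 (A1 B1 : 'M[R]_(m, n1)) (A2 B2 : 'M[R]_(m, n2)) :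
  mxle (row_mx A1 A2) (row_mx B1 B2) <-> mxle A1 B1 /\ mxle A2 B2.
Proof.
split=> [le12|[le1 le2] i j].
  by split=> i j; [move: (le12 i (lshift n2 j)) | move: (le12 i (rshift n1 j))];
    rewrite ?row_mxEl ?row_mxEr.
by rewrite -(splitK j); case: (split j) => j'; rewrite ?row_mxEl ?row_mxEr.
Qed.

End EntrywiseOrder.

Section MonotoneMatrices.
Variable R : realFieldType.

Definition Zmatrix n (M : 'M[R]_n) := forall i j, i != j -> M i j <= 0.

Definition nonpos_row_image_trivial n (M : 'M[R]_n) :=
  forall x : 'rV[R]_n, mxle 0 x -> mxle (x *m M) 0 -> x = 0.

Lemma monotone1 n : monotone (1%:M : 'M[R]_n).
Proof. by split; [apply: unitmx1 | rewrite invmx1; apply: scalar_mx_ge0]. Qed.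

Lemma monotone_nonpos_row_image_trivial n (M : 'M[R]_n) :
  monotone M -> nonpos_row_image_trivial M.
Proof.
move=> [Mu Mi] x x_ge0 xM_le0; apply: mxle_anti => //.
by rewrite -(mulmxK Mu x); apply: mulmx_le0_ge0.
Qed.

Lemma rowsum_gt0_unitmx n (M : 'M[R]_n) : M \in unitmx -> mxle 0 M ->
  forall i, 0 < (M *m const_mx 1 : 'cV_n) i 0.
Proof.
move=> Mu /mxle0P M_ge0 i; rewrite mxE lt_def sumr_ge0 ?andbT; last first.
  by move=> j _; rewrite mxE mulr1.
apply/negP => /eqP /psumr_eq0P row0.
have : (M *m invmx M) i i = 0.
  rewrite mxE big1 // => j _.
  have := row0 _ j isT; rewrite mxE mulr1 => ->; first by rewrite mul0r.
  by move=> k _; rewrite mxE mulr1.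
by rewrite mulmxV // mxE eqxx => /eqP; rewrite oner_eq0.
Qed.

Lemma nonpos_row_image_factor n (N L K M E : 'M[R]_n) :
  mxle 0 L -> mxle 0 K -> monotone M -> mxle 0 E -> N *m L = K *m M + E ->
  forall x : 'rV[R]_n, mxle 0 x -> mxle (x *m N) 0 -> x *m K = 0.
Proof.
move=> L_ge0 K_ge0 M_mono E_ge0 NL x x_ge0 xN_le0.
apply: (monotone_nonpos_row_image_trivial M_mono); first exact: mulmx_ge0.
have -> : x *m K *m M = x *m N *m L - x *m E by rewrite -!mulmxA NL mulmxDr addrK.
apply/mxle_sub0; rewrite sub0r opprB; apply: addmx_ge0; first exact: mulmx_ge0.
by apply/mxle_opp0; apply: mulmx_le0_ge0.
Qed.

Lemma nonpos_row_image_trivial_mulmx n (K M : 'M[R]_n) :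
  K \in unitmx -> mxle 0 K -> monotone M -> nonpos_row_image_trivial (K *m M).
Proof.
move=> K_unit K_ge0 M_mono x x_ge0 xKM_le0.
have xK0 : x *m K = 0.
  apply: (nonpos_row_image_factor (scalar_mx_ge0 ler01) K_ge0 M_mono (mxle_refl 0) _
    x_ge0 xKM_le0).
  by rewrite mulmx1 addr0.
by rewrite -(mulmxK K_unit x) xK0 mul0mx.
Qed.

(* At a row [l] minimising [V l j / u l], a negative minimum would make
   [(M V) l j] negative. *)
Lemma Zmatrix_min_principle n (M : 'M[R]_n) (u : 'cV[R]_n) k (V : 'M[R]_(n, k)) :
  Zmatrix M -> (forall i, 0 < u i 0) -> (forall i, 0 < (M *m u) i 0) ->
  mxle 0 (M *m V) -> mxle 0 V.
Proof.
move=> MZ u_gt0 Mu_gt0 /mxle0P MV_ge0; apply/mxle0P => i j.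
rewrite leNgt; apply/negP => Vij_lt0.
pose F l := V l j / u l 0.
have [i0 _ F_min] := @arg_minP _ R _ i predT F isT.
set c := F i0 in F_min.
have c_lt0 : c < 0 by apply: le_lt_trans (F_min i isT) _; rewrite pmulr_llt0 ?invr_gt0.
have V_ge : forall l, c * u l 0 <= V l j by move=> l; rewrite -ler_pdivlMr ?F_min.
have Vi0 : V i0 j = c * u i0 0 by rewrite /c /F divfK // gt_eqF.
have shift : (M *m V) i0 j - c * (M *m u) i0 0 =
             \sum_l M i0 l * (V l j - c * u l 0).
  by rewrite !mxE mulr_sumr -sumrB; apply: eq_bigr => l _; ring.
have : \sum_l M i0 l * (V l j - c * u l 0) <= 0.
  apply: sumr_le0 => l _; have [->|ne] := eqVneq l i0; first by rewrite Vi0 subrr mulr0.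
  by rewrite mulr_le0_ge0 ?MZ 1?eq_sym // subr_ge0 V_ge.
rewrite -shift subr_le0 => MVi0_le.
have : c * (M *m u) i0 0 < 0 by rewrite pmulr_llt0.
by move: (MV_ge0 i0 j) MVi0_le; lra.
Qed.

Lemma Zmatrix_monotone n (M : 'M[R]_n) (u : 'cV[R]_n) :
  Zmatrix M -> (forall i, 0 < u i 0) -> (forall i, 0 < (M *m u) i 0) -> monotone M.
Proof.
move=> MZ u_gt0 Mu_gt0.
have ker0 (v : 'cV_n) : M *m v = 0 -> v = 0.
  move=> Mv0; apply: mxle_anti.
    apply/mxle_opp0; apply: (Zmatrix_min_principle MZ u_gt0 Mu_gt0).
    by rewrite mulmxN Mv0 oppr0; apply: mxle_refl.
  by apply: (Zmatrix_min_principle MZ u_gt0 Mu_gt0); rewrite Mv0; apply: mxle_refl.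
have Mu : M \in unitmx.
  rewrite unitmxE unitfE -det_tr; apply/negP => /det0P [v v_neq0 vMT0].
  move/eqP: v_neq0; apply; rewrite -[v]trmxK (ker0 v^T) ?trmx0 //.
  by apply: trmx_inj; rewrite trmx_mul trmxK vMT0 trmx0.
split=> //; apply: (Zmatrix_min_principle MZ u_gt0 Mu_gt0).
by rewrite mulmxV //; apply: scalar_mx_ge0.
Qed.

End MonotoneMatrices.

Section PolyRoots.
Variable R : rcfType.

Lemma horner_gt0_left_nbhd (I : finType) (p : I -> {poly R}) z w :
  z < w -> (forall i, 0 < (p i).[w]) ->
  exists2 s, z < s < w & forall i, 0 < (p i).[s].
Proof.
move=> zw p_gt0; pose P := \prod_i p i.
have Pw_gt0 : 0 < P.[w] by rewrite horner_prod; apply: prodr_gt0.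
have P_neq0 : P != 0 by apply: contraTneq Pw_gt0 => ->; rewrite horner0 ltxx.
set l := prev_root P z w.
have lw : l < w by apply: prev_root_lt.
have zl : z <= l.
  by move: (prev_root_in P z w); rewrite in_itv /= (min_idPl (ltW zw)) => /andP[].
pose s := (l + w) / 2.
have ls : l < s by rewrite /s; lra.
have sw : s < w by rewrite /s; lra.
exists s; first by apply/andP; split; lra.
move=> i; have noroot_pi : {in `]l, w], noroot (p i)}.
  move=> y; rewrite in_itv /= => /andP[ly yw].
  have [->|yw'] := eqVneq y w; first by rewrite rootE gt_eqF.
  have : ~~ root P y.
    apply: (@prev_noroot _ P z w); rewrite in_itv /= -/l.
    by rewrite ly lt_neqAle yw' yw.
  by rewrite !rootE horner_prod prodf_seq_eq0 => /hasPn /(_ i (mem_index_enum _)).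
have := polyrN0_itv noroot_pi (y := w) (x := s).
rewrite !in_itv /= ls (ltW sw) lw lexx (gtr0_sg (p_gt0 i)) => /(_ isT isT).
by move/esym/eqP; rewrite sgr_cp0.
Qed.

Lemma horner_ge0_noroot_left (p : {poly R}) z s w :
  z < s < w -> {in `]z, w[, noroot p} -> 0 <= p.[s] -> 0 <= p.[z].
Proof.
move=> /andP[zs sw] noroot_p ps_ge0; rewrite leNgt; apply/negP => pz_lt0.
have ps_gt0 : 0 < p.[s].
  by rewrite lt_def ps_ge0 andbT -rootE; apply: noroot_p; rewrite in_itv /= zs sw.
have [x] : {x | x \in `]z, s[ & root p x}.
  by apply: poly_ivtoo (ltW zs) _; rewrite pmulr_llt0.
rewrite in_itv /= => /andP[zx xs]; apply/negP; apply: noroot_p.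
by rewrite in_itv /= zx (lt_trans xs sw).
Qed.

End PolyRoots.

Section QuadraticPencil.
Variables (R : rcfType) (n : nat) (M2 M1 M0 : 'M[R]_n).

Definition quad_mx (s : R) : 'M[R]_n := s ^+ 2 *: M2 + s *: M1 + M0.

Definition quad_polymx : 'M[{poly R}]_n :=
  \matrix_(i, j) (M2 i j *: 'X^2 + M1 i j *: 'X + (M0 i j)%:P).

Lemma horner_quad_polymx s i j : (quad_polymx i j).[s] = quad_mx s i j.
Proof. by rewrite !mxE !hornerE /=; ring. Qed.

Lemma map_horner_quad_polymx s : map_mx (horner_eval s) quad_polymx = quad_mx s.
Proof. by apply/matrixP => i j; rewrite mxE horner_evalE horner_quad_polymx. Qed.

Lemma det_quad_mx s : \det (quad_mx s) = (\det quad_polymx).[s].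
Proof. by rewrite -map_horner_quad_polymx det_map_mx. Qed.

(* Where [det] does not vanish, entry (i, j) of the inverse has the sign of
   [inv_sign_poly i j]. *)
Definition inv_sign_poly i j := \adj quad_polymx i j * \det quad_polymx.

Definition inv_ge0_at s := [forall i, forall j, 0 <= (inv_sign_poly i j).[s]].

Lemma monotone_quad_mxE s :
  (\det quad_polymx).[s] != 0 -> monotone (quad_mx s) <-> inv_ge0_at s.
Proof.
move=> det_neq0.
have C_unit : quad_mx s \in unitmx by rewrite unitmxE unitfE det_quad_mx.
have invE i j : 0 <= invmx (quad_mx s) i j = (0 <= (inv_sign_poly i j).[s]).
  rewrite /invmx C_unit -map_horner_quad_polymx -map_mx_adj det_map_mx mxE.
  rewrite [map_mx _ _ i j]mxE /= !horner_evalE /inv_sign_poly hornerM.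
  move: det_neq0; set d := (\det quad_polymx).[s] => d_neq0.
  have d2_gt0 : 0 < d ^+ 2 by rewrite exprn_even_gt0.
  by rewrite -(pmulr_rge0 _ d2_gt0) mulrA expr2 mulfK // mulrC.
split=> [[_ /mxle0P inv_ge0]|/forallP inv_ge0].
  by apply/forallP => i; apply/forallP => j; rewrite -invE.
by split=> //; apply/mxle0P => i j; rewrite invE; move/forallP: (inv_ge0 i).
Qed.

Definition critical_poly := \det quad_polymx *
  \prod_(ij : 'I_n * 'I_n)
    (if inv_sign_poly ij.1 ij.2 == 0 then 1 else inv_sign_poly ij.1 ij.2).

Lemma root_critical_poly i j x : inv_sign_poly i j != 0 ->
  root (inv_sign_poly i j) x -> root critical_poly x.
Proof.
move=> q_neq0 /eqP qx0; rewrite rootE /critical_poly hornerM horner_prod mulf_eq0.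
rewrite prodf_seq_eq0.
by apply/orP; right; apply/hasP; exists (i, j); rewrite ?mem_index_enum //= (negPf q_neq0) qx0.
Qed.

Lemma inv_ge0_at_left z s w : z < s < w -> {in `]z, w[, noroot critical_poly} ->
  inv_ge0_at s -> inv_ge0_at z.
Proof.
move=> zsw noroot_crit /forallP good_s; apply/forallP => i; apply/forallP => j.
have [->|q_neq0] := eqVneq (inv_sign_poly i j) 0; first by rewrite horner0.
apply: (horner_ge0_noroot_left zsw); last by move/forallP: (good_s i).
by move=> y /noroot_crit; apply: contra; apply: root_critical_poly.
Qed.

Section Continuation.
Variables a b : R.
Hypothesis quad_Z : forall s, a <= s <= b -> Zmatrix (quad_mx s).
Hypothesis quad_det : forall s, a <= s <= b -> \det (quad_mx s) != 0.

Lemma inv_ge0_at_left_nbhd z w : a <= z -> z < w -> w <= b -> inv_ge0_at w ->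
  exists2 s, z < s < w & inv_ge0_at s.
Proof.
move=> az zw wb good_w.
have in_ab s : z <= s <= w -> a <= s <= b.
  by case/andP=> zs sw; rewrite (le_trans az zs) (le_trans sw wb).
have det_neq0 s : z <= s <= w -> (\det quad_polymx).[s] != 0.
  by move=> /in_ab s_ab; rewrite -det_quad_mx quad_det.
have [Cw_unit Cw_inv_ge0] : monotone (quad_mx w).
  by apply/(monotone_quad_mxE (det_neq0 _ _)) => //; rewrite (ltW zw) lexx.
pose u : 'cV_n := invmx (quad_mx w) *m const_mx 1.
have u_gt0 : forall i, 0 < u i 0 by apply: rowsum_gt0_unitmx; rewrite ?unitmx_inv.
pose p i := (quad_polymx *m map_mx polyC u) i 0.
have pE s i : (p i).[s] = (quad_mx s *m u) i 0.
  rewrite /p [in LHS]mxE [in RHS]mxE horner_sum; apply: eq_bigr => j _.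
  by rewrite hornerM horner_quad_polymx [map_mx _ _ _ _]mxE hornerC.
have [s zsw p_gt0] : exists2 s, z < s < w & forall i, 0 < (p i).[s].
  by apply: horner_gt0_left_nbhd => // i; rewrite pE mulmxA mulmxV // mul1mx mxE.
have s_zw : z <= s <= w by case/andP: zsw => /ltW -> /ltW ->.
exists s => //; apply/(monotone_quad_mxE (det_neq0 _ s_zw)).
apply: (Zmatrix_monotone (u := u)) => // [|i]; last by rewrite -pE.
exact/quad_Z/in_ab.
Qed.

Lemma inv_ge0_at_left_step z w : a <= z -> z < w -> w <= b ->
  {in `]z, w[, noroot critical_poly} -> inv_ge0_at w -> inv_ge0_at z.
Proof.
move=> az zw wb noroot_crit /(inv_ge0_at_left_nbhd az zw wb) [s zsw good_s].
exact: inv_ge0_at_left zsw noroot_crit good_s.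
Qed.

(* If [inv_ge0_at a] failed, take the largest failing point [z] among [a]
   and the roots of [critical_poly] in [(a, b)]; the next root [w > z] (or
   [b]) satisfies it, and [inv_ge0_at_left_step] pulls it back to [z]. *)
Lemma monotone_quad_mx_continuation :
  a <= b -> monotone (quad_mx b) -> monotone (quad_mx a).
Proof.
move=> ab Mb.
have det_neq0 s : a <= s <= b -> (\det quad_polymx).[s] != 0.
  by move=> s_ab; rewrite -det_quad_mx quad_det.
have b_ab : a <= b <= b by rewrite ab lexx.
have good_b : inv_ge0_at b by apply/(monotone_quad_mxE (det_neq0 b b_ab)).
apply/(monotone_quad_mxE (det_neq0 a _)); first by rewrite lexx ab.
have [->//|a_neq_b] := eqVneq a b.
have a_lt_b : a < b by rewrite lt_neqAle a_neq_b.
have crit_neq0 : critical_poly != 0.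
  apply: mulf_neq0.
    by apply: contraTneq (det_neq0 b b_ab) => ->; rewrite horner0 eqxx.
  rewrite prodf_seq_neq0; apply/allP => ij _ /=.
  by case: ifP => [_|/negbT //]; apply: oner_neq0.
apply/negPn/negP => bad_a.
have max_closed (K : pred R) x y : K x -> K y -> K (Num.max x y).
  by move=> Kx Ky; rewrite maxElt; case: ifP.
pose z := \big[Num.max/a]_(y <- roots critical_poly a b | ~~ inv_ge0_at y) y.
have bad_z : ~~ inv_ge0_at z.
  by apply: (big_ind (fun y => ~~ inv_ge0_at y)) => //; apply: max_closed.
have z_lt_b : z < b.
  rewrite /z big_seq_cond; apply: (big_ind (fun y => y < b)) => //; first exact: max_closed.
  by move=> y /andP[/roots_in]; rewrite in_itv /= => /andP[].
pose w := next_root critical_poly z b.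
have zw : z < w by apply: next_root_gt.
have wb : w <= b.
  by move: (next_root_in critical_poly z b); rewrite in_itv /= (max_l (ltW z_lt_b)) => /andP[].
have good_w : inv_ge0_at w.
  rewrite /w; case: next_rootP => [/eqP|y _ y_root y_in _|c _ -> _].
  - by rewrite (negPf crit_neq0).
  - apply/negPn/negP => bad_y; move: y_in; rewrite in_itv /= => /andP[zy yb].
    suff : y <= z by rewrite leNgt zy.
    rewrite /z; apply: (@le_bigmax_seq _ _ _ _ _ y _ (fun y => y)) bad_y.
    rewrite in_roots crit_neq0 rootE y_root eqxx in_itv /= yb.
    by rewrite (le_lt_trans (bigmax_ge_id _ _ _ _) zy).
  - by rewrite (max_l (ltW z_lt_b)).
move: bad_z; rewrite (inv_ge0_at_left_step _ zw wb (@next_noroot _ _ z b) good_w) //.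
exact: bigmax_ge_id.
Qed.

End Continuation.

End QuadraticPencil.

Lemma quad_mx_Zmatrix (R : rcfType) n (U V : 'M[R]_n) s : 0 <= s <= 1 ->
  mxle 0 U -> mxle V 0 -> Zmatrix (quad_mx (1%:M + U - V) (- U) V s).
Proof.
move=> /andP[s_ge0 s_le1] /mxle0P U_ge0 V_le0 i j ij; move: (U_ge0 i j) (V_le0 i j).
rewrite !mxE (negPf ij) add0r; move: (U i j) (V i j) => u v u_ge0 v_le0.
have -> : s ^+ 2 * (u - v) + s * - u + v = (s ^+ 2 - s) * u + (1 - s ^+ 2) * v by ring.
have : (s ^+ 2 - s) * u <= 0 by rewrite mulr_le0_ge0 // subr_le0 expr2 ler_piMl.
have : (1 - s ^+ 2) * v <= 0 by rewrite mulr_ge0_le0 // subr_ge0 expr2 mulr_ile1.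
lra.
Qed.


Section SpectralRadius.
Variable R : rcfType.
Local Open Scope complex_scope.
Local Open Scope ring_scope.

Lemma root_char_polyE m (A : 'M[R]_m) z :
  (z \in sval (closed_field_poly_normal (char_poly (cplx_mx A)))) =
  root (char_poly (cplx_mx A)) z.
Proof.
case: closed_field_poly_normal => r /= ->.
by rewrite (monicP (char_poly_monic _)) scale1r root_prod_XsubC.
Qed.

Lemma spectral_radius_ge0 m (A : 'M[R]_m) : 0 <= spectral_radius A.
Proof. exact: bigmax_ge_id. Qed.

Lemma root_le_spectral_radius m (A : 'M[R]_m) z :
  root (char_poly (cplx_mx A)) z -> complex.Re `|z| <= spectral_radius A.
Proof.
rewrite -root_char_polyE /spectral_radius => z_in.
by apply: (@le_bigmax_seq _ _ _ _ _ z xpredT (fun z => complex.Re `|z|)).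
Qed.

Lemma spectral_radius_le m (A : 'M[R]_m) c : 0 <= c ->
  (forall z, root (char_poly (cplx_mx A)) z -> complex.Re `|z| <= c) ->
  spectral_radius A <= c.
Proof.
move=> c_ge0 roots_le; rewrite /spectral_radius big_seq; apply: bigmax_le => // z.
by rewrite root_char_polyE; apply: roots_le.
Qed.

Lemma spectral_radius_lt m (A : 'M[R]_m) c : 0 < c ->
  (forall z, root (char_poly (cplx_mx A)) z -> complex.Re `|z| < c) ->
  spectral_radius A < c.
Proof.
move=> c_gt0 roots_lt; rewrite /spectral_radius big_seq; apply: bigmax_lt => // z.
by rewrite root_char_polyE; apply: roots_lt.
Qed.

Lemma left_eigen_root_char_poly m (A : 'M[R]_m) (x : 'rV[R]_m) (c : R) :
  x != 0 -> x *m A = c *: x -> root (char_poly (cplx_mx A)) c%:C.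
Proof.
move=> x_neq0 xA; rewrite -eigenvalue_root_char; apply/eigenvalueP.
exists (map_mx (real_complex R) x); last by rewrite map_mx_eq0.
by rewrite /cplx_mx -map_mxM xA map_mxZ.
Qed.

Lemma Re_normcE (z : R[i]) : (complex.Re `|z|)%:C = `|z|.
Proof. by rewrite RRe_real // normr_real. Qed.

(* Take entrywise moduli of a complex left eigenvector. *)
Lemma nneg_root_subeigenvector m (T : 'M[R]_m) z : mxle 0 T ->
  root (char_poly (cplx_mx T)) z ->
  exists2 w : 'rV[R]_m, mxle 0 w /\ w != 0 & mxle (complex.Re `|z| *: w) (w *m T).
Proof.
move=> /mxle0P T_ge0; rewrite -eigenvalue_root_char => /eigenvalueP [v vT v_neq0].
pose w : 'rV[R]_m := \row_j complex.Re `|v 0 j|.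
exists w.
  split; first by apply/mxle0P => i j; rewrite mxE -ler0c Re_normcE.
  apply: contraNneq v_neq0 => w0; apply/eqP/matrixP => i j.
  have := congr1 (fun M : 'rV_m => M i j) w0; rewrite !mxE ord1 => wj0.
  by apply/eqP; rewrite -normr_eq0 -Re_normcE wj0.
move=> i j; rewrite ord1 -lecR !mxE rmorphM /= Re_normcE rmorph_sum /=.
have := congr1 (fun M : 'rV_m => M 0 j) vT; rewrite !mxE => vTj.
rewrite -normrM -vTj (le_trans (ler_norm_sum _ _ _)) //.
apply: ler_sum => l _; rewrite !mxE rmorphM /= Re_normcE normrM ler_pM //.
by rewrite ger0_norm // ler0c.
Qed.

End SpectralRadius.

Section Companion.
Variables (R : rcfType) (n : nat) (B C : 'M[R]_n).
Hypotheses (B_ge0 : mxle 0 B) (C_ge0 : mxle 0 C).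
Local Open Scope complex_scope.
Local Open Scope ring_scope.

Definition companion_mx : 'M[R]_(n + n) := block_mx B C 1%:M 0.

(* For [s != 0], [det (s - companion_mx) = det (companion_pencil s)] by a
   Schur complement. *)
Definition companion_pencil (s : R) : 'M[R]_n := s ^+ 2 *: 1%:M - s *: B - C.

Local Notation rho := (spectral_radius companion_mx).
Local Notation char_root z := (root (char_poly (cplx_mx companion_mx)) z).

Lemma companion_pencil_quad_mx s : companion_pencil s = quad_mx 1%:M (- B) (- C) s.
Proof. by rewrite /companion_pencil /quad_mx scalerN. Qed.

Lemma mulmx_companion_pencil (x : 'rV[R]_n) s :
  x *m companion_pencil s = s ^+ 2 *: x - s *: (x *m B) - x *m C.
Proof. by rewrite /companion_pencil !mulmxBr -!scalemxAr mulmx1. Qed.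

Lemma companion_pencil_antitone (x : 'rV[R]_n) s a : 0 < s <= a -> mxle 0 x ->
  mxle (x *m companion_pencil a) 0 -> mxle (x *m companion_pencil s) 0.
Proof.
move=> /andP[s_gt0 sa] x_ge0; rewrite !mulmx_companion_pencil.
move: (mulmx_ge0 x_ge0 B_ge0) (mulmx_ge0 x_ge0 C_ge0).
move: (x *m B) (x *m C) => xB xC xB_ge0 xC_ge0 xQa_le0 i j.
move: (xQa_le0 i j) (x_ge0 i j) (xB_ge0 i j) (xC_ge0 i j); rewrite !mxE.
move: (x i j) (xB i j) (xC i j) => X XB XC Qa_le0 X_ge0 XB_ge0 XC_ge0.
have a_gt0 : 0 < a by apply: lt_le_trans sa.
rewrite -(pmulr_rle0 _ (exprn_gt0 2 a_gt0)).
have -> : a ^+ 2 * (s ^+ 2 * X - s * XB - XC) =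
  s ^+ 2 * (a ^+ 2 * X - a * XB - XC) - s * a * (a - s) * XB - (a ^+ 2 - s ^+ 2) * XC.
  by ring.
have : 0 <= s * a * (a - s) * XB by rewrite !mulr_ge0 ?subr_ge0 // ltW.
have : 0 <= (a ^+ 2 - s ^+ 2) * XC by rewrite mulr_ge0 // subr_ge0 lerXn2r // nnegrE ltW.
have : s ^+ 2 * (a ^+ 2 * X - a * XB - XC) <= 0 by rewrite mulr_ge0_le0 // sqr_ge0.
lra.
Qed.

Lemma companion_pencil_Zmatrix s : 0 <= s -> Zmatrix (companion_pencil s).
Proof.
move=> s_ge0 i j ij; rewrite !mxE (negPf ij) mulr0 sub0r.
by rewrite -opprD oppr_le0 addr_ge0 ?mulr_ge0 //; [move/mxle0P: B_ge0 | move/mxle0P: C_ge0].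
Qed.

Lemma companion_mx_ge0 : mxle 0 companion_mx.
Proof. by apply: block_mx_ge0 => //; apply: scalar_mx_ge0. Qed.

(* Splitting a nonnegative subeigenvector [(x, y)] of [companion_mx] for
   [r = |z|] gives [r x <= x B + y] and [r y <= x C], hence
   [x *m companion_pencil r <= 0]. *)
Lemma companion_root_pencil z a : char_root z -> 0 < a <= complex.Re `|z| ->
  exists2 x : 'rV[R]_n, mxle 0 x /\ x != 0 & mxle (x *m companion_pencil a) 0.
Proof.
move=> z_root /andP[a_gt0 a_le]; set r := complex.Re `|z| in a_le.
have r_gt0 : 0 < r by apply: lt_le_trans a_le.
have [w [w_ge0 w_neq0] w_sub] := nneg_root_subeigenvector companion_mx_ge0 z_root.
rewrite -/r -[w]hsubmxK in w_ge0 w_neq0 w_sub.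
move: (lsubmx w) (rsubmx w) w_ge0 w_neq0 w_sub => x y.
rewrite -row_mx0 => /mxle_row_mx [x_ge0 y_ge0] w_neq0.
rewrite /companion_mx mul_row_block mulmx1 mulmx0 addr0 scale_row_mx.
move=> /mxle_row_mx [rx_le ry_le].
have xQr_le0 : mxle (x *m companion_pencil r) 0.
  move=> i j; rewrite mulmx_companion_pencil.
  move: (rx_le i j) (ry_le i j) (y_ge0 i j) (mulmx_ge0 x_ge0 C_ge0 i j).
  move: (x *m B) (x *m C) => xB xC; rewrite !mxE.
  move: (x i j) (y i j) (xB i j) (xC i j) => X Y XB XC rX_le rY_le Y_ge0 XC_ge0.
  have : 0 <= r * (XB + Y - r * X) by rewrite mulr_ge0 ?subr_ge0 // ltW.
  by rewrite expr2; lra.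
exists x; last by apply: (companion_pencil_antitone _ x_ge0 xQr_le0); rewrite a_gt0 a_le.
split=> //; apply: contraNneq w_neq0 => x0.
suff -> : y = 0 by rewrite x0 row_mx0.
apply: mxle_anti => // i j; move: (ry_le i j); rewrite x0 mul0mx !mxE.
by rewrite pmulr_rle0.
Qed.

Lemma companion_pencil_root (x : 'rV[R]_n) s : 0 < s -> x != 0 ->
  x *m companion_pencil s = 0 -> char_root s%:C.
Proof.
move=> s_gt0 x_neq0 xQ0.
apply: (@left_eigen_root_char_poly _ _ _ (row_mx x (s^-1 *: (x *m C)))).
  by apply: contraNneq x_neq0; rewrite -row_mx0 => /eq_row_mx [->].
rewrite /companion_mx mul_row_block mulmx1 mulmx0 addr0 scale_row_mx scalerA.
rewrite divff ?gt_eqF // scale1r; congr row_mx.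
move/eqP: xQ0; rewrite mulmx_companion_pencil !subr_eq0 => /eqP xQ0.
apply: (@scalerI _ _ s); first by rewrite gt_eqF.
by rewrite scalerDr scalerA divff ?gt_eqF // scale1r scalerA -expr2 -xQ0 addrC subrK.
Qed.

Lemma companion_pencil_unitmx s : rho < s -> companion_pencil s \in unitmx.
Proof.
move=> rho_lt_s; have s_gt0 : 0 < s by apply: le_lt_trans (spectral_radius_ge0 _) rho_lt_s.
rewrite unitmxE unitfE; apply/negP => /det0P [x x_neq0 xQ0].
have := root_le_spectral_radius (companion_pencil_root s_gt0 x_neq0 xQ0).
by rewrite ger0_norm ?ler0c ?(ltW s_gt0) //= leNgt rho_lt_s.
Qed.

Lemma companion_spectral_radius_lt1 :
  nonpos_row_image_trivial (companion_pencil 1) -> rho < 1.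
Proof.
move=> trivial1; apply: spectral_radius_lt => // z z_root; rewrite ltNge.
apply/negP => r_ge1; have := companion_root_pencil (a := 1) z_root.
rewrite ltr01 r_ge1 => /(_ isT) [x [x_ge0 x_neq0] xQ_le0].
by move: x_neq0; rewrite (trivial1 x x_ge0 xQ_le0) eqxx.
Qed.

Lemma companion_spectral_radius_le c : 0 <= c < 1 ->
  (forall a, c < a <= 1 -> nonpos_row_image_trivial (companion_pencil a)) -> rho <= c.
Proof.
move=> /andP[c_ge0 c_lt1] trivial_a; apply: spectral_radius_le => // z z_root.
rewrite leNgt; apply/negP => c_lt_r.
have := companion_root_pencil (a := Num.min (complex.Re `|z|) 1) z_root.
rewrite ge_min lexx lt_min (le_lt_trans c_ge0 c_lt_r) ltr01 => /(_ isT).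
move=> [x [x_ge0 x_neq0] xQ_le0]; move: x_neq0.
by rewrite (trivial_a _ _ x x_ge0 xQ_le0) ?eqxx // lt_min c_lt_r c_lt1 ge_min lexx orbT.
Qed.

End Companion.

Lemma companion_pencil1_splitting (R : rcfType) n (A P N S : 'M[R]_n) :
  A = P - N + S -> P \in unitmx ->
  companion_pencil (invmx P *m N) (- (invmx P *m S)) 1 = invmx P *m A.
Proof.
move=> -> P_unit; rewrite /companion_pencil expr1n !scale1r opprK.
by rewrite mulmxDr mulmxBr mulVmx.
Qed.

Section DoubleSplittings.
Variables (R : rcfType) (n : nat) (A P1 R1 S1 P2 R2 S2 : 'M[R]_n).
Local Notation X1 := (invmx P1 *m R1).
Local Notation Y1 := (invmx P1 *m S1).
Local Notation X2 := (invmx P2 *m R2).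
Local Notation Y2 := (invmx P2 *m S2).
Hypotheses (A_unit : A \in unitmx) (Ainv_ge0 : mxle 0 (invmx A)).
Hypotheses (A1 : A = P1 - R1 + S1) (P1_unit : P1 \in unitmx)
  (P1inv_ge0 : mxle 0 (invmx P1)) (X1_ge0 : mxle 0 X1) (Y1_le0 : mxle Y1 0).
Hypotheses (A2 : A = P2 - R2 + S2) (P2_unit : P2 \in unitmx)
  (P2inv_ge0 : mxle 0 (invmx P2)) (R2_ge0 : mxle 0 R2) (S2_le0 : mxle S2 0).
Hypotheses (X2_le_X1 : mxle X2 X1) (Y1_le_Y2 : mxle Y1 Y2).

Local Notation Q1 := (companion_pencil X1 (- Y1)).
Local Notation Q2 := (companion_pencil X2 (- Y2)).
Local Notation QW := (companion_pencil (X2 - Y2 *m X1) (Y2 *m Y1)).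
Local Notation rho1 := (spectral_radius (companion_mx X1 (- Y1))).
Local Notation rho2 := (spectral_radius (companion_mx X2 (- Y2))).
Local Notation rhoW := (spectral_radius (companion_mx (X2 - Y2 *m X1) (Y2 *m Y1))).

Let Y1N_ge0 : mxle 0 (- Y1) := proj1 (mxle_opp0 _) Y1_le0.
Let Y2_le0 : mxle Y2 0 := mulmx_ge0_le0 P2inv_ge0 S2_le0.
Let Y2N_ge0 : mxle 0 (- Y2) := proj1 (mxle_opp0 _) Y2_le0.
Let X2_ge0 : mxle 0 X2 := mulmx_ge0 P2inv_ge0 R2_ge0.
Let XW_ge0 : mxle 0 (X2 - Y2 *m X1).
Proof. by rewrite -mulNmx; apply: addmx_ge0 => //; apply: mulmx_ge0. Qed.
Let YW_ge0 : mxle 0 (Y2 *m Y1) := mulmx_le0 Y2_le0 Y1_le0.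

Lemma Q1_monotone1 : monotone (Q1 1).
Proof.
apply: (Zmatrix_monotone (u := invmx A *m const_mx 1)).
- exact: companion_pencil_Zmatrix.
- by apply: rowsum_gt0_unitmx; rewrite ?unitmx_inv.
- move=> i; rewrite (companion_pencil1_splitting A1 P1_unit) -mulmxA mulKVmx //.
  by apply: rowsum_gt0_unitmx; rewrite ?unitmx_inv.
Qed.

Lemma rho1_lt1 : rho1 < 1.
Proof.
apply: companion_spectral_radius_lt1 => //.
exact: monotone_nonpos_row_image_trivial Q1_monotone1.
Qed.

Lemma rho2_lt1 : rho2 < 1.
Proof.
apply: companion_spectral_radius_lt1 => //; rewrite (companion_pencil1_splitting A2 P2_unit).
by apply: nonpos_row_image_trivial_mulmx; rewrite ?unitmx_inv.
Qed.

Lemma Q1_monotone a : rho1 < a <= 1 -> monotone (Q1 a).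
Proof.
move=> /andP[rho1_lt_a a_le1]; rewrite companion_pencil_quad_mx.
have a_lt s : a <= s -> rho1 < s by apply: lt_le_trans.
apply: (monotone_quad_mx_continuation (b := 1)) => //.
- move=> s /andP[a_le_s _]; rewrite -companion_pencil_quad_mx.
  apply: companion_pencil_Zmatrix => //.
  exact: ltW (le_lt_trans (spectral_radius_ge0 _) (a_lt s a_le_s)).
- move=> s /andP[a_le_s _]; rewrite -companion_pencil_quad_mx -unitfE -unitmxE.
  by rewrite companion_pencil_unitmx ?a_lt.
- by rewrite -companion_pencil_quad_mx; apply: Q1_monotone1.
Qed.

Lemma QW_trivial_via_Q1 a : rho1 < a <= 1 -> nonpos_row_image_trivial (QW a).
Proof.
move=> a_in x x_ge0 xQW_le0; have /andP[rho1_lt_a a_le1] := a_in.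
have a_ge0 : 0 <= a by apply: ltW (le_lt_trans (spectral_radius_ge0 _) rho1_lt_a).
pose D := a *: (X1 - X2) + (Y2 - Y1) + (1 - a ^+ 2) *: (- Y2).
have D_ge0 : mxle 0 D.
  apply: addmx_ge0; first apply: addmx_ge0.
  - by apply: scalemx_ge0 => //; move/mxle_sub0: X2_le_X1.
  - by move/mxle_sub0: Y1_le_Y2.
  - by apply: scalemx_ge0; rewrite // subr_ge0 exprn_ile1.
have QWE : QW a *m 1%:M = (1%:M - Y2) *m Q1 a + D.
  rewrite mulmx1 /D /companion_pencil mulmxBl mul1mx !mulmxBr !mulmxN -!scalemxAr mulmx1.
  move: (Y2 *m X1) (Y2 *m Y1) => u v; move: X1 X2 Y1 Y2 => p q r t.
  by apply/matrixP => i j; rewrite !mxE; ring.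
have K_ge0 : mxle 0 (1%:M - Y2) by apply: addmx_ge0 => //; apply: scalar_mx_ge0.
have := nonpos_row_image_factor (scalar_mx_ge0 ler01) K_ge0 (Q1_monotone a_in) D_ge0 QWE
  x_ge0 xQW_le0.
rewrite mulmxBr mulmx1 => /eqP; rewrite subr_eq0 => /eqP x_eq.
by apply: mxle_anti => //; rewrite x_eq; apply: mulmx_ge0_le0.
Qed.

Lemma rhoW_le_rho1 : rhoW <= rho1.
Proof.
apply: companion_spectral_radius_le => //; last exact: QW_trivial_via_Q1.
by rewrite spectral_radius_ge0 rho1_lt1.
Qed.

Lemma P2_Q2_Ainv_quad_mx s : P2 *m Q2 s *m invmx A =
  quad_mx (1%:M + R2 *m invmx A - S2 *m invmx A) (- (R2 *m invmx A)) (S2 *m invmx A) s.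
Proof.
have P2A : P2 *m invmx A = 1%:M + R2 *m invmx A - S2 *m invmx A.
  rewrite -(mulmxV A_unit) -mulmxDl -mulmxBl; congr (_ *m _); rewrite A2.
  by apply/matrixP => i j; rewrite !mxE; ring.
rewrite -P2A /companion_pencil /quad_mx opprK !mulmxDr mulmxN -!scalemxAr mulmx1.
by rewrite !mulKVmx // mulmxDl mulmxBl -!scalemxAl scalerN.
Qed.

Lemma P2_Q2_Ainv_monotone a : rho2 < a <= 1 -> monotone (P2 *m Q2 a *m invmx A).
Proof.
move=> /andP[rho2_lt_a a_le1]; rewrite P2_Q2_Ainv_quad_mx.
have a_lt s : a <= s -> rho2 < s by apply: lt_le_trans.
have a_ge0 : 0 <= a by apply: ltW (le_lt_trans (spectral_radius_ge0 _) rho2_lt_a).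
apply: (monotone_quad_mx_continuation (b := 1)) => //.
- move=> s /andP[a_le_s s_le1]; apply: quad_mx_Zmatrix.
  + by rewrite s_le1 (le_trans a_ge0 a_le_s).
  + exact: mulmx_ge0.
  + exact: mulmx_le0_ge0.
- move=> s /andP[a_le_s _].
  rewrite -P2_Q2_Ainv_quad_mx -unitfE -unitmxE !unitmx_mul P2_unit unitmx_inv A_unit andbT.
  by rewrite companion_pencil_unitmx ?a_lt.
- rewrite -P2_Q2_Ainv_quad_mx (companion_pencil1_splitting A2 P2_unit) mulKVmx // mulmxV //.
  exact: monotone1.
Qed.

Lemma QW_trivial_via_Q2 a : rho2 < a <= 1 -> nonpos_row_image_trivial (QW a).
Proof.
move=> a_in x x_ge0 xQW_le0; have /andP[_ a_le1] := a_in.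
pose E := (- Y2) *m (invmx P1 + (1 - a) *: (X1 *m invmx A)).
have E_ge0 : mxle 0 E.
  apply: mulmx_ge0 => //; apply: addmx_ge0 => //.
  by apply: scalemx_ge0; rewrite ?subr_ge0 //; apply: mulmx_ge0.
have QWE : QW a *m invmx A = invmx P2 *m (P2 *m Q2 a *m invmx A) + E.
  have -> : QW a = Q2 a + (- Y2) *m (invmx P1 *m A + (1 - a) *: X1).
    have -> : invmx P1 *m A = 1%:M - X1 + Y1 by rewrite A1 mulmxDr mulmxBr mulVmx.
    rewrite /companion_pencil !mulmxDr !mulmxN mulmx1 -!scalemxAr !mulNmx.
    move: (Y2 *m X1) (Y2 *m Y1) => u v; move: X1 X2 Y1 Y2 => p q r t.
    by apply/matrixP => i j; rewrite !mxE; ring.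
  rewrite -[P2 *m _ *m _]mulmxA mulKmx // [(_ + _) *m _]mulmxDl; congr (_ + _).
  by rewrite -mulmxA mulmxDl mulmxK // -scalemxAl.
have := nonpos_row_image_factor Ainv_ge0 P2inv_ge0 (P2_Q2_Ainv_monotone a_in) E_ge0 QWE
  x_ge0 xQW_le0.
by move=> xP0; rewrite -(mulmxKV P2_unit x) xP0 mul0mx.
Qed.

Lemma rhoW_le_rho2 : rhoW <= rho2.
Proof.
apply: companion_spectral_radius_le => //; last exact: QW_trivial_via_Q2.
by rewrite spectral_radius_ge0 rho2_lt1.
Qed.

Lemma double_splitting_spectral_radius_comparison :
  rhoW <= Num.min rho1 rho2 /\ Num.min rho1 rho2 < 1.
Proof.
split; first by rewrite le_min; apply/andP; split; [apply: rhoW_le_rho1 | apply: rhoW_le_rho2].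
by rewrite gt_min; apply/orP; right; exact: rho2_lt1.
Qed.

End DoubleSplittings.

Theorem corollary3p7 (R : rcfType) (n : nat) (A P1 R1 S1 P2 R2 S2 : 'M[R]_n) :
  monotone A ->
  double_weak_regular_splitting A P1 R1 S1 ->
  double_regular_splitting A P2 R2 S2 ->
  ~ (1 \in spectrum (S2 *m invmx P1)) ->
  mxle 0 (invmx ((1%:M - S2 *m invmx P1) *m A)) ->
  mxle (invmx P2 *m R2) (invmx P1 *m R1) ->
  mxle (invmx P1 *m S1) (invmx P2 *m S2) ->
  let W12 : 'M[R]_(n + n) :=
    block_mx (invmx P2 *m R2 - invmx P2 *m S2 *m invmx P1 *m R1)
             (invmx P2 *m S2 *m invmx P1 *m S1) 1%:M 0 in
  let T1 : 'M[R]_(n + n) := block_mx (invmx P1 *m R1) (- (invmx P1 *m S1)) 1%:M 0 in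
  let T2 : 'M[R]_(n + n) := block_mx (invmx P2 *m R2) (- (invmx P2 *m S2)) 1%:M 0 in
  spectral_radius W12 <= Num.min (spectral_radius T1) (spectral_radius T2) /\
  Num.min (spectral_radius T1) (spectral_radius T2) < 1.
Proof.
move=> [A_unit Ainv_ge0] [[A1 P1_unit] [P1inv_ge0 [X1_ge0 Y1_le0]]].
move=> [[A2 P2_unit] [P2inv_ge0 [R2_ge0 S2_le0]]] _ _ X2_le_X1 Y1_le_Y2 W12 T1 T2.
have -> : W12 = companion_mx (invmx P2 *m R2 - invmx P2 *m S2 *m (invmx P1 *m R1))
                             (invmx P2 *m S2 *m (invmx P1 *m S1)).
  by rewrite /W12 !mulmxA.
exact: (double_splitting_spectral_radius_comparison A_unit Ainv_ge0
  A1 P1_unit P1inv_ge0 X1_ge0 Y1_le0 A2 P2_unit P2inv_ge0 R2_ge0 S2_le0 X2_le_X1 Y1_le_Y2).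
Qed.
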